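(* Let $FTS=\langle S_0,S,Act,\to,L,\mathcal{F}\rangle$ be a fair transition system with $\mathcal{F}=\{F_1,\dots,F_m\}$, and let $\sigma$ be an execution of $FTS$. If there are states $s,s'$ and an index $i$ such that $s\in Inf_s(\sigma)$, $s'\in Inf_s(\sigma)$ and $s\xrightarrow{a}s'\in F_i$, then there exist $s_1,s_1'$ with $s_1\xrightarrow{a}s_1'\in F_i$ and $s_1\xrightarrow{a}s_1'\in Inf_t(\sigma)$. In particular, an execution that visits infinitely often both endpoints of a fair transition of $F_i$ takes some transition of $F_i$ infinitely often.
   Context: A transition system $\langle S_0,S,Act,\to,L\rangle$ has a finite set of states $S$, initial states $S_0\subseteq S$, a set of action labels $Act$, a total labelled transition relation $\to\subseteq S\times Act\times S$ (written $s\xrightarrow{a}s'$), and a labelling $L$ of states by atomic propositions. An execution is an infinite sequence $s_0\xrightarrow{a_0}s_1\xrightarrow{a_1}s_2\cdots$ with $s_0\in S_0$ and each $s_k\xrightarrow{a_k}s_{k+1}\in\to$; a fragment is a finite or infinite contiguous piece of an execution; $s\xrightarrow{+}s'$ denotes a fragment of one or more transitions from $s$ to $s'$. $Inf_s(\sigma)$ is the set of states occurring infinitely often in $\sigma$ and $Inf_t(\sigma)$ the set of transitions occurring infinitely often in $\sigma$. A fair transition system is a transition system together with a set $\mathcal{F}=\{F_1,\dots,F_m\}$ of fairness constraints, $F_i\subseteq\to$, such that: (a) all transitions in one $F_i$ carry the same label; (b) whenever $s\xrightarrow{a}s'\in F_i$, every fragment $s\xrightarrow{+}s'$ (one or more transitions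 from $s$ to $s'$) has the form $s\xrightarrow{*}s_1\xrightarrow{a}s_1'\xrightarrow{*}s'$ with $s_1\xrightarrow{a}s_1'\in F_i$; (c) if $s\xrightarrow{a}s'\in F_i$ and $s\xrightarrow{a}s''\in\to$ then $s'=s''$. *)

From mathcomp Require Export all_boot.
Set Implicit Arguments. Unset Strict Implicit. Unset Printing Implicit Defensive.

Section FTS.
Variables (S : finType) (Act : Type).

Definition trans_rel := S -> Act -> S -> Prop.

Definition total_trans (tr : trans_rel) : Prop :=
  forall s, exists a s', tr s a s'.

Definition is_execution (S0 : S -> Prop) (tr : trans_rel)
    (x : nat -> S) (l : nat -> Act) : Prop :=
  S0 (x 0) /\ forall k, tr (x k) (l k) (x k.+1).

Definition inf_state (x : nat -> S) (s : S) : Prop :=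
  forall N, exists k, N <= k /\ x k = s.

Definition inf_trans (x : nat -> S) (l : nat -> Act) (s : S) (a : Act) (s' : S)
  : Prop :=
  forall N, exists k, [/\ N <= k, x k = s, l k = a & x k.+1 = s'].

(* A fairness constraint F (a set of transitions) satisfying (a), (b), (c).
   A fragment s -+-> s' is a finite contiguous piece x i ... x j (i < j)
   of an execution. *)
Definition fairness_constraint (S0 : S -> Prop) (tr : trans_rel)
    (F : trans_rel) : Prop :=
  [/\
      (forall s a s', F s a s' -> tr s a s'),
      (forall s a s' t b t', F s a s' -> F t b t' -> a = b),
      (forall s a s', F s a s' ->
         forall x l, is_execution S0 tr x l ->
         forall i j, i < j -> x i = s -> x j = s' ->
         exists k, [/\ i <= k < j, l k = a & F (x k) a (x k.+1)])
    &
      (forall s a s' s'', F s a s' -> tr s a s'' -> s' = s'')].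

Definition is_fts (AP : Type) (S0 : S -> Prop) (tr : trans_rel)
    (L : S -> AP -> Prop) (m : nat) (F : 'I_m -> trans_rel) : Prop :=
  total_trans tr /\ forall i, fairness_constraint S0 tr (F i).

End FTS.

(** The fair transitions labelled [a] are taken infinitely often: between a
    visit of [s] and a later visit of [s'] condition (b) forces one of them.
    As there are only finitely many pairs of states, some single transition
    of [F_i] is among them infinitely often (infinite pigeonhole). *)

From mathcomp Require Import all_boot.
From Stdlib Require Import Classical_Prop.

Set Implicit Arguments.
Unset Strict Implicit.

Definition infinitely_often (P : nat -> Prop) : Prop :=
  forall N, exists2 k, N <= k & P k.

Lemma eventually_all_in (T : eqType) (Q : T -> nat -> Prop) (ts : seq T) :
  (forall t, t \in ts -> exists N, forall k, N <= k -> Q t k) ->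
  exists N, forall t, t \in ts -> forall k, N <= k -> Q t k.
Proof.
elim: ts => [|t0 ts IH] evQ; first by exists 0.
have [N0 HN0] := evQ t0 (mem_head _ _).
have [N1 HN1] := IH (fun t ts_t => evQ t (mem_behead (s:=t0 :: ts) ts_t)).
exists (maxn N0 N1) => t; rewrite in_cons => /orP[/eqP-> | ts_t] k.
- by rewrite geq_max => /andP[/HN0].
- by rewrite geq_max => /andP[_ /HN1]; apply.
Qed.

Lemma infinitely_often_pigeonhole (T : finType) (f : nat -> T) (P : nat -> Prop) :
  infinitely_often P -> exists t, infinitely_often (fun k => P k /\ f k = t).
Proof.
move=> ioP; apply: NNPP => no_t.
have evQ t : t \in enum T ->
    exists N, forall k, N <= k -> ~ (P k /\ f k = t).
  move=> _; apply: NNPP => not_ev; apply: no_t; exists t => N.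
  apply: NNPP => no_k; apply: not_ev; exists N => k leNk Pk.
  by apply: no_k; exists k.
have [N HN] := eventually_all_in evQ.
have [k leNk Pk] := ioP N.
by apply: (HN (f k) _ k leNk); rewrite ?mem_enum.
Qed.

Section FairnessConstraint.
Variables (S : finType) (Act : Type) (S0 : S -> Prop) (tr : trans_rel S Act).
Variables (F : trans_rel S Act) (x : nat -> S) (l : nat -> Act).
Hypotheses (fairF : fairness_constraint S0 tr F) (exec : is_execution S0 tr x l).

Lemma fair_label_infinitely_often s a s' :
  inf_state x s -> inf_state x s' -> F s a s' ->
  infinitely_often (fun k => l k = a /\ F (x k) a (x k.+1)).
Proof.
move=> inf_s inf_s' Fss' N; have [_ _ fragment_fair _] := fairF.
have [k1 [leNk1 x_k1]] := inf_s N.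
have [k2 [ltk12 x_k2]] := inf_s' k1.+1.
have [k [/andP[lek1k _] l_k Fk]] :=
  fragment_fair _ _ _ Fss' x l exec k1 k2 ltk12 x_k1 x_k2.
by exists k; first exact: leq_trans lek1k.
Qed.

Lemma fair_transition_infinitely_often s a s' :
  inf_state x s -> inf_state x s' -> F s a s' ->
  exists s1 s1', F s1 a s1' /\ inf_trans x l s1 a s1'.
Proof.
move=> inf_s inf_s' Fss'.
have [[s1 s1'] io_pair] := infinitely_often_pigeonhole (fun k => (x k, x k.+1))
  (fair_label_infinitely_often inf_s inf_s' Fss').
exists s1, s1'; split.
- by have [k _ [[_ Fk] [<- <-]]] := io_pair 0.
- by move=> N; have [k leNk [[l_k _] [x_k x_k1]]] := io_pair N; exists k.
Qed.

End FairnessConstraint.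

Theorem mainTheorem1 (S : finType) (Act AP : Type) (S0 : S -> Prop)
  (tr : trans_rel S Act) (L : S -> AP -> Prop) (m : nat)
  (F : 'I_m -> trans_rel S Act)
  (Hfts : is_fts S0 tr L F)
  (x : nat -> S) (l : nat -> Act) (Hexec : is_execution S0 tr x l)
  (s s' : S) (a : Act) (i : 'I_m) :
  inf_state x s -> inf_state x s' -> F i s a s' ->
  exists s1 s1', F i s1 a s1' /\ inf_trans x l s1 a s1'.
Proof.
have [_ fairF] := Hfts.
exact: fair_transition_infinitely_often (fairF i) Hexec s a s'.
Qed.
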